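(* Consider the partially replicated key-value store running the client and server algorithms described in the context. Let $K'$ be a version of key $k'$ created by operation PUT$(k',K')$ and $K$ a version of key $k$ created by PUT$(k,K)$, and suppose PUT$(k',K') \rightarrow$ PUT$(k,K)$ (so $K$ dep $K'$). Let $u_{K'},u_K$ denote the corresponding update messages, with timestamps $u_{K'}.ut, u_K.ut$. Then $u_{K'}.ut < u_K.ut$ and $K'.ut < K.ut$.
   Context: System: servers $1,\dots,n$ and clients; each client $c$ can send requests to a fixed set $S_c$ of servers. Server $i$ stores a set of keys $\mathcal{K}_i$ in a multi-version store; a version is a tuple $K=\langle k,v,ut\rangle$ (key, value, timestamp $K.ut$). Servers communicate over reliable FIFO point-to-point channels; each server $i$ has a physical clock $Clock_i$ that increases over time. Client $c$ keeps scalars $PT_c,GT_c$ (initially $0$) and a vector $LST_c$ indexed by $S_c$ (initially $0$). Client PUT$(k,v)$ at server $i$: send $(k,v,\max(PT_c,GT_c))$ to $i$, receive a timestamp $t$, set $PT_c\leftarrow\max(PT_c,t)$. Client GET$(k)$ at server $i$: compute $rd=\min_{j\in S_c,j\ne i}LST_c(j)$, send $(k,PT_c,rd,S_c)$, receive $(v,t,\{lst_j\})$, set $GT_c\leftarrow\max(GT_c,t)$ and $LST_c(j)\leftarrow\max(LST_c(j),lst_j)$ for all $j\in S_c$, return $v$. Server $i$ on a PUT request $(k,v,t)$: wait until $t<Clock_i$; create version $K$ with $K.k=k$, $K.v=v$, $K.ut=Clock_i$; insert it locally; send an update message $u_K=K$ to every server storing $k$; reply $K.ut$ to the client. On a GET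 request $(k,t,rd,g)$: (possibly wait, and) return the value $K.v$ and timestamp $K.ut$ of some locally stored version $K$ of $k$ (together with some auxiliary values). On receiving an update $u$ from server $j$: insert $u$ into local storage. Happens-before: for operations (PUT or GET) $e,f$, $e\rightarrow f$ iff (1) $e,f$ are by the same client and $e$ occurs earlier, or (2) $e$ is PUT$(k,v)$ and $f$ is a GET$(k)$ returning the value written by $e$, or (3) there is $g$ with $e\rightarrow g$ and $g\rightarrow f$. Version $K$ of $k$ causally depends on version $K'$ of $k'$ ($K$ dep $K'$) iff PUT$(k',K')\rightarrow$ PUT$(k,K)$. *)

From Stdlib Require Import Arith List Relations Bool.
Import ListNotations.

(* Operation identifiers: (client, sequence number of the operation at
   that client).  Used as ghost information only. *)
Definition OpId := (nat * nat)%type.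

Section Model.
Variables Key Val : Type.
(* number of servers; servers are 1..n *)
Variable n : nat.
(* Kset i k : server i stores key k  (k \in K_i) *)
Variable Kset : nat -> Key -> bool.
(* Sc c : the fixed set S_c of servers client c may contact *)
Variable Sc : nat -> list nat.

(* A version <k, v, ut>, plus the (ghost) id of the PUT that created it. *)
Record Version := mkVersion { vk : Key; vv : Val; vut : nat; vop : OpId }.

Record Update := mkUpdate { u_ver : Version }.
Definition u_ut (u : Update) : nat := vut (u_ver u).

Inductive Request :=
| ReqPut (o : OpId) (k : Key) (v : Val) (t : nat)
| ReqGet (o : OpId) (k : Key) (t : nat) (rd : option nat) (g : list nat).

Inductive Reply :=
| RepPut (t : nat)
| RepGet (v : Val) (t : nat) (lst : nat -> nat).

(* ghost log of operations as executed at servers *)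
Inductive Event :=
| EPut (o : OpId) (K : Version)
| EGet (o : OpId) (K : Version).

Record State := mkState {
  clk   : nat -> nat;
  store : nat -> list Version;
  chan  : nat -> nat -> list Update;  (* FIFO channel from i to j *)
  cPT   : nat -> nat;
  cGT   : nat -> nat;
  cLST  : nat -> nat -> nat;
  cseq  : nat -> nat;                 (* number of operations issued by c *)
  creq  : nat -> option (nat * Request); (* outstanding request (server, req) *)
  crep  : nat -> option Reply;        (* reply in transit to c *)
  log   : list Event
}.

Definition init : State :=
  mkState (fun _ => 0) (fun _ => []) (fun _ _ => []) (fun _ => 0) (fun _ => 0)
          (fun _ _ => 0) (fun _ => 0) (fun _ => None) (fun _ => None) [].

Definition upd {A} (f : nat -> A) (x : nat) (a : A) : nat -> A :=
  fun y => if Nat.eqb y x then a else f y.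

Definition is_server (i : nat) : Prop := 1 <= i <= n.

(* rd = min_{j in S_c, j <> i} LST_c(j); None when that set is empty *)
Definition min_opt (l : list nat) : option nat :=
  match l with
  | [] => None
  | x :: r => Some (fold_left Nat.min r x)
  end.
Definition compute_rd (c i : nat) (LST : nat -> nat) : option nat :=
  min_opt (map LST (filter (fun j => negb (Nat.eqb j i)) (Sc c))).

Definition idle (s : State) (c : nat) : Prop := creq s c = None /\ crep s c = None.

Inductive step : State -> State -> Prop :=
| StTick s i d : is_server i ->
    step s (mkState (upd (clk s) i (clk s i + S d)) (store s) (chan s) (cPT s)
              (cGT s) (cLST s) (cseq s) (creq s) (crep s) (log s))
| StClientPut s c i k v : idle s c -> In i (Sc c) -> is_server i -> Kset i k = true ->
    step s (mkState (clk s) (store s) (chan s) (cPT s) (cGT s) (cLST s)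
              (upd (cseq s) c (S (cseq s c)))
              (upd (creq s) c (Some (i, ReqPut (c, cseq s c) k v
                                          (Nat.max (cPT s c) (cGT s c)))))
              (crep s) (log s))
| StClientGet s c i k : idle s c -> In i (Sc c) -> is_server i -> Kset i k = true ->
    step s (mkState (clk s) (store s) (chan s) (cPT s) (cGT s) (cLST s)
              (upd (cseq s) c (S (cseq s c)))
              (upd (creq s) c (Some (i, ReqGet (c, cseq s c) k (cPT s c)
                                          (compute_rd c i (cLST s c)) (Sc c))))
              (crep s) (log s))
| StServerPut s c i o k v t :
    creq s c = Some (i, ReqPut o k v t) -> t < clk s i ->
    let K := mkVersion k v (clk s i) o in
    step s (mkState (clk s) (upd (store s) i (K :: store s i))
              (upd (chan s) i (fun j => if negb (Nat.eqb j i) && Kset j k && Nat.leb 1 j && Nat.leb j n then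
                                  (chan s i j ++ [mkUpdate K]) else chan s i j))
              (cPT s) (cGT s) (cLST s) (cseq s)
              (upd (creq s) c None) (upd (crep s) c (Some (RepPut (vut K))))
              (EPut o K :: log s))
| StServerGet s c i o k t rd g K lst :
    creq s c = Some (i, ReqGet o k t rd g) -> In K (store s i) -> vk K = k ->
    step s (mkState (clk s) (store s) (chan s) (cPT s) (cGT s) (cLST s) (cseq s)
              (upd (creq s) c None) (upd (crep s) c (Some (RepGet (vv K) (vut K) lst)))
              (EGet o K :: log s))
| StRecvPut s c t : crep s c = Some (RepPut t) ->
    step s (mkState (clk s) (store s) (chan s)
              (upd (cPT s) c (Nat.max (cPT s c) t)) (cGT s) (cLST s) (cseq s)
              (creq s) (upd (crep s) c None) (log s))
| StRecvGet s c v t lst : crep s c = Some (RepGet v t lst) ->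
    step s (mkState (clk s) (store s) (chan s) (cPT s)
              (upd (cGT s) c (Nat.max (cGT s c) t))
              (upd (cLST s) c (fun j => if existsb (Nat.eqb j) (Sc c)
                                        then Nat.max (cLST s c j) (lst j)
                                        else cLST s c j))
              (cseq s) (creq s) (upd (crep s) c None) (log s))
| StDeliver s i j u rest : chan s i j = u :: rest ->
    step s (mkState (clk s) (upd (store s) j (u_ver u :: store s j))
              (upd (chan s) i (upd (chan s i) j rest))
              (cPT s) (cGT s) (cLST s) (cseq s) (creq s) (crep s) (log s)).

Definition reachable (s : State) : Prop := clos_refl_trans _ step init s.

(* operations of the execution: all issued operations *)
Definition issued (s : State) (o : OpId) : Prop := snd o < cseq s (fst o).

Inductive hb_base (s : State) : OpId -> OpId -> Prop :=
| HbClient e f : issued s e -> issued s f -> fst e = fst f -> snd e < snd f ->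
    hb_base s e f
| HbRead e f K : In (EPut e K) (log s) -> In (EGet f K) (log s) -> hb_base s e f.

Definition hb (s : State) : OpId -> OpId -> Prop := clos_trans _ (hb_base s).

End Model.

Arguments EPut {Key Val} o K.
Arguments EGet {Key Val} o K.
Arguments mkUpdate {Key Val} u_ver.
Arguments log {Key Val} s.
Arguments vut {Key Val} v.
Arguments u_ut {Key Val} u.

From Stdlib Require Import Arith List Relations Lia.

(* Give every operation a ghost timestamp: its client's max(PT, GT) when it is
   issued, raised to the timestamp of the version it writes or reads when a
   server handles it.  A PUT's ghost timestamp is the timestamp of its version,
   and it strictly exceeds that of every earlier operation of its client,
   because the server waits until its clock passes the dependency time
   max(PT, GT) sent along.  Ghost timestamps never decrease along a client's
   history nor from a PUT to a GET returning its version, so they strictly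
   increase along any happens-before chain that ends in a PUT. *)

#[local] Arguments cPT {Key Val} s _.
#[local] Arguments cGT {Key Val} s _.
#[local] Arguments cLST {Key Val} s _ _.
#[local] Arguments cseq {Key Val} s _.
#[local] Arguments creq {Key Val} s _.
#[local] Arguments crep {Key Val} s _.
#[local] Arguments clk {Key Val} s _.
#[local] Arguments store {Key Val} s _.
#[local] Arguments chan {Key Val} s _ _.
#[local] Arguments mkState {Key Val}.
#[local] Arguments issued {Key Val} s o.
#[local] Arguments ReqPut {Key Val}.
#[local] Arguments ReqGet {Key Val}.
#[local] Arguments RepPut {Val}.
#[local] Arguments RepGet {Val}.

Lemma upd_eq {A} (f : nat -> A) x a : upd f x a x = a.
Proof. unfold upd. now rewrite Nat.eqb_refl. Qed.

Lemma upd_neq {A} (f : nat -> A) x a y : y <> x -> upd f x a y = f y.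
Proof. intros Hne. unfold upd. now destruct (Nat.eqb_spec y x). Qed.

Definition op_eq_dec (a b : OpId) : {a = b} + {a <> b}.
Proof. decide equality; apply Nat.eq_dec. Defined.

Definition set_ts (w : OpId -> nat) (o : OpId) (x : nat) : OpId -> nat :=
  fun p => if op_eq_dec p o then x else w p.

Lemma set_ts_eq w o x : set_ts w o x o = x.
Proof. unfold set_ts. now destruct (op_eq_dec o o). Qed.

Lemma set_ts_neq w o x p : p <> o -> set_ts w o x p = w p.
Proof. intros Hne. unfold set_ts. now destruct (op_eq_dec p o). Qed.

Definition reply_ts {Val : Type} (rep : Reply Val) : nat :=
  match rep with RepPut t => t | RepGet _ t _ => t end.

Section Timestamps.

Variables Key Val : Type.

Definition event_op (ev : Event Key Val) : OpId :=
  match ev with EPut o _ | EGet o _ => o end.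

Definition request_op (r : Request Key Val) : OpId :=
  match r with ReqPut o _ _ _ | ReqGet o _ _ _ _ => o end.

Definition observed_ts (s : State Key Val) (c : nat) : nat :=
  Nat.max (Nat.max (cPT s c) (cGT s c))
    (match crep s c with Some rep => reply_ts rep | None => 0 end).

Definition ts_before (s : State Key Val) (w : OpId -> nat) (a b : OpId) : Prop :=
  w a <= w b /\ (forall K, In (EPut b K) (log s) -> w a < w b).

(* [w] holds the ghost timestamps of the operations issued so far. *)
Record ts_invariant (s : State Key Val) (w : OpId -> nat) : Prop := {
  log_op_inj : forall ev1 ev2, In ev1 (log s) -> In ev2 (log s) ->
    event_op ev1 = event_op ev2 -> ev1 = ev2;
  log_op_issued : forall ev, In ev (log s) -> issued s (event_op ev);
  pending_op : forall c i r, creq s c = Some (i, r) ->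
    fst (request_op r) = c /\ S (snd (request_op r)) = cseq s c;
  pending_not_logged : forall c i r ev, creq s c = Some (i, r) -> In ev (log s) ->
    event_op ev <> request_op r;
  pending_no_reply : forall c i r, creq s c = Some (i, r) -> crep s c = None;
  pending_put_dep : forall c i o k v t, creq s c = Some (i, ReqPut o k v t) ->
    t = Nat.max (cPT s c) (cGT s c);
  ts_put : forall o K, In (EPut o K) (log s) -> w o = vut K;
  ts_get : forall o K, In (EGet o K) (log s) -> vut K <= w o;
  ts_client_order : forall a b, fst a = fst b -> snd a < snd b -> issued s b ->
    ts_before s w a b;
  ts_observed : forall c q, issued s (c, q) -> w (c, q) <= observed_ts s c
}.

Lemma ts_invariant_init : ts_invariant (init Key Val) (fun _ => 0).
Proof.
  split; unfold issued; cbn; intros; solve [contradiction | discriminate | lia].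
Qed.

Lemma ts_invariant_frame (s : State Key Val) w ck st ch lst :
  ts_invariant s w ->
  ts_invariant (mkState ck st ch (cPT s) (cGT s) lst (cseq s) (creq s) (crep s) (log s)) w.
Proof. intros []. split; assumption. Qed.

Section Issue.

Variables (s : State Key Val) (w : OpId -> nat) (c i : nat) (r : Request Key Val).
Hypothesis Hinv : ts_invariant s w.
Hypothesis Hidle : idle Key Val s c.
Hypothesis Hop : request_op r = (c, cseq s c).
Hypothesis Hdep : forall o k v t, r = ReqPut o k v t -> t = Nat.max (cPT s c) (cGT s c).

Let issuing := mkState (clk s) (store s) (chan s) (cPT s) (cGT s) (cLST s)
  (upd (cseq s) c (S (cseq s c))) (upd (creq s) c (Some (i, r))) (crep s) (log s).
Let ts := set_ts w (c, cseq s c) (Nat.max (cPT s c) (cGT s c)).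

Lemma issued_neq_next o : issued s o -> o <> (c, cseq s c).
Proof. intros Ho ->. unfold issued in Ho. cbn in Ho. lia. Qed.

Lemma issuing_issued o : issued issuing o <-> issued s o \/ o = (c, cseq s c).
Proof.
  destruct o as [c' q]. unfold issued. cbn.
  destruct (Nat.eq_dec c' c) as [-> | Hne].
  - rewrite upd_eq. split.
    + intros Hq. destruct (Nat.eq_dec q (cseq s c)) as [->|]; [right|left; lia]; easy.
    + intros [Hq | Hq]; [lia | injection Hq; lia].
  - rewrite upd_neq by assumption. split; [now left|].
    intros [Hq | Hq]; [easy | now injection Hq].
Qed.

Lemma issuing_log_fresh ev : In ev (log s) -> event_op ev <> (c, cseq s c).
Proof. intros Hev. apply issued_neq_next, (log_op_issued _ _ Hinv), Hev. Qed.

Lemma issuing_ts_client_order a b :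
  fst a = fst b -> snd a < snd b -> issued issuing b -> ts_before issuing ts a b.
Proof.
  destruct a as [ca qa], b as [cb qb]. cbn. intros <- Hlt Hb.
  apply issuing_issued in Hb.
  assert (Ha : issued s (ca, qa))
    by (destruct Hb as [Hb | [= -> ->]]; unfold issued in *; cbn in *; lia).
  unfold ts_before, ts. rewrite (set_ts_neq _ _ _ (ca, qa)) by now apply issued_neq_next.
  destruct Hb as [Hb | [= -> ->]].
  - rewrite set_ts_neq by now apply issued_neq_next.
    now apply (ts_client_order _ _ Hinv).
  - rewrite set_ts_eq.
    pose proof (ts_observed _ _ Hinv _ _ Ha) as Hobs.
    unfold observed_ts in Hobs. rewrite (proj2 Hidle) in Hobs.
    split; [lia|]. intros K HK. exfalso. exact (issuing_log_fresh _ HK eq_refl).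
Qed.

Lemma ts_invariant_issue : ts_invariant issuing ts.
Proof.
  pose proof issuing_log_fresh as Hfresh.
  unfold issuing, ts. split; cbn.
  - exact (log_op_inj _ _ Hinv).
  - intros ev Hev. apply issuing_issued. left. exact (log_op_issued _ _ Hinv _ Hev).
  - intros c' i' r' Hr'. destruct (Nat.eq_dec c' c) as [-> | Hne].
    + rewrite upd_eq in Hr'. injection Hr' as <- <-. rewrite Hop, upd_eq. easy.
    + rewrite upd_neq in Hr' by assumption. rewrite upd_neq by assumption.
      exact (pending_op _ _ Hinv _ _ _ Hr').
  - intros c' i' r' ev Hr' Hev. destruct (Nat.eq_dec c' c) as [-> | Hne].
    + rewrite upd_eq in Hr'. injection Hr' as <- <-. rewrite Hop. exact (Hfresh _ Hev).
    + rewrite upd_neq in Hr' by assumption. exact (pending_not_logged _ _ Hinv _ _ _ _ Hr' Hev).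
  - intros c' i' r' Hr'. destruct (Nat.eq_dec c' c) as [-> | Hne]; [exact (proj2 Hidle)|].
    rewrite upd_neq in Hr' by assumption. exact (pending_no_reply _ _ Hinv _ _ _ Hr').
  - intros c' i' o k v t Hr'. destruct (Nat.eq_dec c' c) as [-> | Hne].
    + rewrite upd_eq in Hr'. injection Hr' as _ Hr'. exact (Hdep o k v t Hr').
    + rewrite upd_neq in Hr' by assumption. exact (pending_put_dep _ _ Hinv _ _ _ _ _ _ Hr').
  - intros o K HK. rewrite set_ts_neq by exact (Hfresh _ HK). exact (ts_put _ _ Hinv _ _ HK).
  - intros o K HK. rewrite set_ts_neq by exact (Hfresh _ HK). exact (ts_get _ _ Hinv _ _ HK).
  - exact issuing_ts_client_order.
  - intros c' q Hq. apply issuing_issued in Hq. unfold observed_ts. cbn.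
    destruct Hq as [Hq | [= -> ->]].
    + rewrite set_ts_neq by now apply issued_neq_next. exact (ts_observed _ _ Hinv _ _ Hq).
    + rewrite set_ts_eq. lia.
Qed.

End Issue.

Section Serve.

Variables (s : State Key Val) (w : OpId -> nat) (c i : nat) (r : Request Key Val).
Variables (st : nat -> list (Version Key Val)) (ch : nat -> nat -> list (Update Key Val)).
Variables (ev : Event Key Val) (K : Version Key Val) (rep : Reply Val).
Hypothesis Hinv : ts_invariant s w.
Hypothesis Hreq : creq s c = Some (i, r).
(* For a PUT the inequality is the server's wait [t < Clock_i]. *)
Hypothesis Hev : (ev = EPut (request_op r) K /\ Nat.max (cPT s c) (cGT s c) < vut K)
                 \/ ev = EGet (request_op r) K.
Hypothesis Hrep : reply_ts rep = vut K.

Let served := mkState (clk s) st ch (cPT s) (cGT s) (cLST s) (cseq s)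
  (upd (creq s) c None) (upd (crep s) c (Some rep)) (ev :: log s).
Let ts := set_ts w (request_op r) (Nat.max (Nat.max (cPT s c) (cGT s c)) (vut K)).

Lemma served_event_op : event_op ev = request_op r.
Proof. now destruct Hev as [[-> _] | ->]. Qed.

Lemma served_op_fresh ev' : In ev' (log s) -> event_op ev' <> request_op r.
Proof. exact (pending_not_logged _ _ Hinv _ _ _ _ Hreq). Qed.

Lemma served_op_client : fst (request_op r) = c /\ S (snd (request_op r)) = cseq s c.
Proof. exact (pending_op _ _ Hinv _ _ _ Hreq). Qed.

Lemma served_client_ts q : issued s (c, q) -> w (c, q) <= Nat.max (cPT s c) (cGT s c).
Proof.
  intros Hq. pose proof (ts_observed _ _ Hinv _ _ Hq) as Hobs.
  unfold observed_ts in Hobs. rewrite (pending_no_reply _ _ Hinv _ _ _ Hreq) in Hobs. lia.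
Qed.

Lemma served_ts_client_order a b :
  fst a = fst b -> snd a < snd b -> issued s b -> ts_before served ts a b.
Proof.
  destruct served_op_client as [Hc Hq].
  destruct a as [ca qa], b as [cb qb]. cbn. intros <- Hlt Hb. unfold ts_before, ts. cbn.
  destruct (op_eq_dec (ca, qb) (request_op r)) as [Eb | Nb].
  - rewrite <- Eb in Hc, Hq. cbn in Hc, Hq. subst ca.
    rewrite Eb, set_ts_eq, set_ts_neq by (rewrite <- Eb; intros [= E]; lia).
    assert (Hw := served_client_ts qa ltac:(unfold issued in *; cbn in *; lia)).
    split; [lia|]. intros K' [E | HK].
    + destruct Hev as [[E' Hlt'] | E']; rewrite E' in E; [|discriminate]. lia.
    + exfalso. exact (served_op_fresh _ HK eq_refl).
  - destruct (op_eq_dec (ca, qa) (request_op r)) as [Ea | Na].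
    + exfalso. rewrite <- Ea in Hc, Hq. cbn in Hc, Hq. subst ca.
      unfold issued in Hb. cbn in Hb. lia.
    + rewrite !set_ts_neq by assumption.
      destruct (ts_client_order _ _ Hinv (ca, qa) (ca, qb) eq_refl Hlt Hb) as [Hle Hput].
      split; [exact Hle|]. intros K' [E | HK]; [|exact (Hput _ HK)].
      exfalso. apply Nb. rewrite <- served_event_op, E. reflexivity.
Qed.

Lemma served_ts_observed c' q :
  issued served (c', q) -> ts (c', q) <= observed_ts served c'.
Proof.
  destruct served_op_client as [Hc _].
  intros Hq. unfold ts, observed_ts. cbn.
  destruct (Nat.eq_dec c' c) as [-> | Hne].
  - rewrite upd_eq, Hrep.
    destruct (op_eq_dec (c, q) (request_op r)) as [E | N].
    + rewrite E, set_ts_eq. lia.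
    + rewrite set_ts_neq by exact N. pose proof (served_client_ts q Hq). lia.
  - rewrite upd_neq by assumption.
    rewrite set_ts_neq by (intros E; apply Hne; rewrite <- Hc, <- E; reflexivity).
    exact (ts_observed _ _ Hinv _ _ Hq).
Qed.

Lemma ts_invariant_serve : ts_invariant served ts.
Proof.
  pose proof served_event_op as Hop. pose proof served_op_fresh as Hfresh.
  destruct served_op_client as [Hc Hq].
  unfold served, ts. split; cbn.
  - intros ev1 ev2 [<- | H1] [<- | H2] E; try reflexivity.
    + exfalso. apply (Hfresh _ H2). congruence.
    + exfalso. apply (Hfresh _ H1). congruence.
    + exact (log_op_inj _ _ Hinv _ _ H1 H2 E).
  - intros ev' [<- | H].
    + rewrite Hop. unfold issued. cbn. rewrite Hc. lia.
    + exact (log_op_issued _ _ Hinv _ H).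
  - intros c' i' r' Hr'. destruct (Nat.eq_dec c' c) as [-> | Hne].
    + rewrite upd_eq in Hr'. discriminate.
    + rewrite upd_neq in Hr' by assumption. exact (pending_op _ _ Hinv _ _ _ Hr').
  - intros c' i' r' ev' Hr' Hev'. destruct (Nat.eq_dec c' c) as [-> | Hne].
    + rewrite upd_eq in Hr'. discriminate.
    + rewrite upd_neq in Hr' by assumption. destruct Hev' as [<- | Hev'].
      * rewrite Hop. intros E. apply Hne.
        rewrite <- (proj1 (pending_op _ _ Hinv _ _ _ Hr')), <- E. exact Hc.
      * exact (pending_not_logged _ _ Hinv _ _ _ _ Hr' Hev').
  - intros c' i' r' Hr'. destruct (Nat.eq_dec c' c) as [-> | Hne].
    + rewrite upd_eq in Hr'. discriminate.
    + rewrite upd_neq in Hr' by assumption. rewrite upd_neq by assumption.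
      exact (pending_no_reply _ _ Hinv _ _ _ Hr').
  - intros c' i' o k v t Hr'. destruct (Nat.eq_dec c' c) as [-> | Hne].
    + rewrite upd_eq in Hr'. discriminate.
    + rewrite upd_neq in Hr' by assumption. exact (pending_put_dep _ _ Hinv _ _ _ _ _ _ Hr').
  - intros o K' [E | HK].
    + destruct Hev as [[E' Hlt] | E']; rewrite E' in E; [|discriminate].
      injection E as <- <-. rewrite set_ts_eq. lia.
    + rewrite set_ts_neq by exact (Hfresh _ HK). exact (ts_put _ _ Hinv _ _ HK).
  - intros o K' [E | HK].
    + destruct Hev as [[E' _] | E']; rewrite E' in E; [discriminate|].
      injection E as <- <-. rewrite set_ts_eq. lia.
    + rewrite set_ts_neq by exact (Hfresh _ HK). exact (ts_get _ _ Hinv _ _ HK).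
  - exact served_ts_client_order.
  - exact served_ts_observed.
Qed.

End Serve.

Lemma ts_invariant_receive (s : State Key Val) w c rep PT GT lst :
  ts_invariant s w -> crep s c = Some rep ->
  (forall c', c' <> c -> PT c' = cPT s c' /\ GT c' = cGT s c') ->
  observed_ts s c <= Nat.max (PT c) (GT c) ->
  ts_invariant (mkState (clk s) (store s) (chan s) PT GT lst (cseq s) (creq s)
                  (upd (crep s) c None) (log s)) w.
Proof.
  intros Hinv Hrep Hother Hobs.
  assert (Hnoreq : forall i r, creq s c <> Some (i, r)).
  { intros i r Hr. rewrite (pending_no_reply _ _ Hinv _ _ _ Hr) in Hrep. discriminate. }
  destruct Hinv as [Hinj Hiss Hop Hfresh Hnorep Hdep Hput Hget Horder Hobs'].
  split; cbn; try assumption.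
  - intros c' i r Hr. destruct (Nat.eq_dec c' c) as [-> | Hne].
    + now apply Hnoreq in Hr.
    + rewrite upd_neq by assumption. exact (Hnorep _ _ _ Hr).
  - intros c' i o k v t Hr. destruct (Nat.eq_dec c' c) as [-> | Hne].
    + now apply Hnoreq in Hr.
    + destruct (Hother _ Hne) as [-> ->]. exact (Hdep _ _ _ _ _ _ Hr).
  - intros c' q Hq. specialize (Hobs' _ _ Hq). unfold observed_ts in *. cbn.
    destruct (Nat.eq_dec c' c) as [-> | Hne].
    + rewrite upd_eq. lia.
    + rewrite upd_neq by assumption. destruct (Hother _ Hne) as [-> ->]. lia.
Qed.

Variables (n : nat) (Kset : nat -> Key -> bool) (Sc : nat -> list nat).

Lemma step_ts_invariant s s' w :
  step Key Val n Kset Sc s s' -> ts_invariant s w -> exists w', ts_invariant s' w'.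
Proof.
  intros Hstep Hinv. destruct Hstep.
  - eexists. exact (ts_invariant_frame _ _ _ _ _ _ Hinv).
  - eexists. apply (ts_invariant_issue s w); [assumption .. | reflexivity |].
    intros ? ? ? ? [= _ _ E]. now symmetry.
  - eexists. apply (ts_invariant_issue s w); [assumption .. | reflexivity | discriminate].
  - eexists. apply (ts_invariant_serve s w c i) with (K := K);
      [exact Hinv | exact H | | reflexivity].
    left. split; [reflexivity|]. now rewrite <- (pending_put_dep _ _ Hinv _ _ _ _ _ _ H).
  - eexists. apply (ts_invariant_serve s w c i) with (K := K);
      [exact Hinv | exact H | | reflexivity].
    subst k. now right.
  - exists w. apply ts_invariant_receive with (rep := RepPut t); [assumption .. | |].
    + intros c' Hne. now rewrite upd_neq.
    + unfold observed_ts. rewrite H, upd_eq. cbn. lia.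
  - exists w. apply ts_invariant_receive with (rep := RepGet v t lst); [assumption .. | |].
    + intros c' Hne. now rewrite upd_neq.
    + unfold observed_ts. rewrite H, upd_eq. cbn. lia.
  - eexists. exact (ts_invariant_frame _ _ _ _ _ _ Hinv).
Qed.

Lemma reachable_ts_invariant s :
  reachable Key Val n Kset Sc s -> exists w, ts_invariant s w.
Proof.
  intros Hreach. apply clos_rt_rtn1 in Hreach.
  induction Hreach as [| s' s'' Hstep _ [w Hinv]].
  - exists (fun _ => 0). exact ts_invariant_init.
  - exact (step_ts_invariant _ _ _ Hstep Hinv).
Qed.

Lemma ts_before_trans s w a b d :
  ts_before s w a b -> ts_before s w b d -> ts_before s w a d.
Proof.
  intros [Hab Hab'] [Hbd Hbd']. split; [lia|].
  intros K HK. specialize (Hbd' K HK). lia.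
Qed.

Lemma hb_base_ts_before s w a b :
  ts_invariant s w -> hb_base Key Val s a b -> ts_before s w a b.
Proof.
  intros Hinv Hab. destruct Hab as [a b _ Hb Hfst Hsnd | a b K Ha Hb].
  - exact (ts_client_order _ _ Hinv _ _ Hfst Hsnd Hb).
  - unfold ts_before. rewrite (ts_put _ _ Hinv _ _ Ha).
    split; [exact (ts_get _ _ Hinv _ _ Hb)|].
    intros K' HK'. discriminate (log_op_inj _ _ Hinv _ _ HK' Hb eq_refl).
Qed.

Lemma hb_ts_before s w a b :
  ts_invariant s w -> hb Key Val s a b -> ts_before s w a b.
Proof.
  intros Hinv Hhb. induction Hhb as [a b Hab | a b d _ IHab _ IHbd].
  - exact (hb_base_ts_before _ _ _ _ Hinv Hab).
  - exact (ts_before_trans _ _ _ _ _ IHab IHbd).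
Qed.

End Timestamps.

Theorem lemma5p1 (Key Val : Type) (n : nat) (Kset : nat -> Key -> bool)
  (Sc : nat -> list nat) (s : State Key Val)
  (Hreach : reachable Key Val n Kset Sc s)
  (e f : OpId) (K' K : Version Key Val) :
  In (EPut e K') (log s) -> In (EPut f K) (log s) ->
  hb Key Val s e f ->
  u_ut (mkUpdate K') < u_ut (mkUpdate K) /\ vut K' < vut K.
Proof.
  intros He Hf Hhb.
  destruct (reachable_ts_invariant _ _ _ _ _ _ Hreach) as [w Hinv].
  destruct (hb_ts_before _ _ _ _ _ _ Hinv Hhb) as [_ Hlt].
  specialize (Hlt _ Hf).
  rewrite (ts_put _ _ _ _ Hinv _ _ He), (ts_put _ _ _ _ Hinv _ _ Hf) in Hlt.
  unfold u_ut. cbn. lia.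
Qed.
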